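(* For every integer $n\ge 1$, letting $\mu=\mu(n)$ be the exponent of the highest power of $2$ dividing $n$, $$t^{\mu}\bigl(B_{n+1}(t)+B_{n-1}(t)\bigr)=\bigl(B_{2^{\mu}+1}(t)+B_{2^{\mu}-1}(t)\bigr)B_{n}(t).$$ In particular, if $n$ is odd then $B_{n+1}(t)+B_{n-1}(t)=tB_n(t)$.
   Context: The Stern polynomials $B_n(t)\in\mathbb{Z}[t]$, $n\ge 0$, are defined by $B_0(t)=0$, $B_1(t)=1$, $B_{2n}(t)=tB_n(t)$ and $B_{2n+1}(t)=B_n(t)+B_{n+1}(t)$ for $n\ge 1$. *)

From mathcomp Require Import all_boot all_order all_algebra.
Set Implicit Arguments. Unset Strict Implicit. Unset Printing Implicit Defensive.
Import GRing.Theory.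
Local Open Scope ring_scope.

(* Fuel-based evaluation of the recursion
   B_0 = 0, B_1 = 1, B_{2m} = t B_m, B_{2m+1} = B_m + B_{m+1}. *)
Fixpoint stern_fuel (fuel n : nat) : {poly int} :=
  match fuel with
  | O => 0
  | S f =>
    match n with
    | O => 0
    | S O => 1
    | _ => if odd n then stern_fuel f n./2 + stern_fuel f (n./2).+1
           else 'X * stern_fuel f n./2
    end
  end.

Definition stern (n : nat) : {poly int} := stern_fuel n.+1 n.

Lemma stern_half_lt (n : nat) : (((n.+3)./2).+1 < n.+3)%N.
Proof.
rewrite /= !ltnS uphalf_half.
have := odd_double_half n; rewrite -addnn.
by case: (odd n) => /= E; rewrite -{2}E ?leq_add2l ?add0n leq_addr.
Qed.

Lemma stern_fuel_enough (f n : nat) : (n < f)%N -> stern_fuel f n = stern n.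
Proof.
suff H : forall a b m, (m < a)%N -> (m < b)%N -> stern_fuel a m = stern_fuel b m.
  by move=> Hn; rewrite /stern; apply: H.
clear; elim=> [|f' IH] [|g] n //= Hf Hg.
rewrite ltnS in Hf; rewrite ltnS in Hg.
case: n Hf Hg => [|[|[|n]]] Hf Hg //.
  by rewrite /= (IH g 1).
have h3 := stern_half_lt n.
have h2 : ((n.+3)./2 < n.+3)%N by apply: ltnW.
rewrite !(IH _ _ (leq_trans h2 Hf) (leq_trans h2 Hg))
        !(IH _ _ (leq_trans h3 Hf) (leq_trans h3 Hg)) //.
Qed.

Lemma stern0 : stern 0 = 0. Proof. by []. Qed.
Lemma stern1 : stern 1 = 1. Proof. by []. Qed.

Lemma stern_fuelS (f n : nat) : (2 <= n)%N ->
  stern_fuel f.+1 n = if odd n then stern_fuel f n./2 + stern_fuel f (n./2).+1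
                      else 'X * stern_fuel f n./2.
Proof. by case: n => [|[|n]]. Qed.

Lemma stern_even (n : nat) : (1 <= n)%N -> stern n.*2 = 'X * stern n.
Proof.
move=> Hn; rewrite {1}/stern stern_fuelS; last by rewrite -addnn (leq_add Hn Hn).
rewrite odd_double doubleK; congr (_ * _); apply: stern_fuel_enough.
by rewrite -addnn -{1}[n]addn0 ltn_add2l.
Qed.

Lemma half_double_S (n : nat) : (n.*2.+1)./2 = n.
Proof. by rewrite -[n.*2.+1]/(true + n.*2)%N half_bit_double. Qed.

Lemma odd_double_S (n : nat) : odd n.*2.+1.
Proof. by rewrite /= odd_double. Qed.

Lemma stern_odd (n : nat) : (1 <= n)%N ->
  stern n.*2.+1 = stern n + stern n.+1.
Proof.
move=> Hn; rewrite {1}/stern stern_fuelS; last by rewrite ltnS -addnn (leq_trans Hn (leq_addr _ _)).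
rewrite odd_double_S half_double_S; congr (_ + _); apply: stern_fuel_enough.
  by rewrite ltnS -addnn leq_addr.
by rewrite !ltnS -addnn -{1}[n]addn0 ltn_add2l.
Qed.

From mathcomp Require Import all_boot all_order all_algebra.
From mathcomp Require Import ring.
Import GRing.Theory.
Local Open Scope ring_scope.

(* Write  S(k) = B_{k+1} + B_{k-1}  for the sum of the two
   neighbours of B_k.  The Stern recursion gives two facts about S:
   - for odd m,  S(m) = t B_m  (both neighbours are even-indexed);
   - for k >= 1,  S(2k) = S(k) + 2 B_k  (both neighbours are odd-indexed).
   Since B_{2^j} = t^j, the second fact specialises to
   S(2^{j+1}) = S(2^j) + 2 t^j.  Induction on j then shows, for odd m,
       t^j S(2^j m) = S(2^j) B_{2^j m},
   and the theorem is the case  n = 2^mu m  of this identity, the odd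
   part m of n being provided by the library's factorisation of n. *)

Lemma stern_double (n : nat) : stern n.*2 = 'X * stern n.
Proof. by case: n => [|n]; [rewrite mulr0 | exact: stern_even]. Qed.

Lemma stern_double_succ (n : nat) : stern n.*2.+1 = stern n + stern n.+1.
Proof. by case: n => [|n]; [rewrite stern0 add0r | exact: stern_odd]. Qed.

Lemma stern_pow2 (j : nat) : stern (2 ^ j) = 'X ^+ j.
Proof. by elim: j => [|j IH]; rewrite ?expr0 // expnS mul2n stern_double IH exprS. Qed.

Definition neighbour_sum (k : nat) : {poly int} := stern k.+1 + stern k.-1.

(* At an odd index both neighbours are even-indexed: S(m) = t B_m. *)
Lemma neighbour_sum_odd (m : nat) : odd m -> neighbour_sum m = 'X * stern m.
Proof.
move=> m_odd; rewrite -[m](odd_double_half m) m_odd add1n /neighbour_sum /=.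
by rewrite -doubleS !stern_double stern_double_succ -mulrDr addrC.
Qed.

(* At an even index both neighbours are odd-indexed: S(2k) = S(k) + 2 B_k. *)
Lemma neighbour_sum_double (k : nat) : (0 < k)%N ->
  neighbour_sum k.*2 = neighbour_sum k + stern k *+ 2.
Proof.
case: k => [//|k] _; rewrite /neighbour_sum.
have -> : (k.+1.*2).-1 = k.*2.+1 by rewrite doubleS.
rewrite !stern_double_succ mulr2n; ring.
Qed.

Lemma neighbour_sum_pow2S (j : nat) :
  neighbour_sum (2 ^ j.+1) = neighbour_sum (2 ^ j) + 'X ^+ j *+ 2.
Proof. by rewrite expnS mul2n neighbour_sum_double ?expn_gt0 // stern_pow2. Qed.

Lemma neighbour_sum_pow2_mul (j m : nat) : odd m ->
  'X ^+ j * neighbour_sum (2 ^ j * m) = neighbour_sum (2 ^ j) * stern (2 ^ j * m).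
Proof.
move=> m_odd; elim: j => [|j IH].
  by rewrite expr0 mul1r !mul1n neighbour_sum_odd // (neighbour_sum_odd 1%N) // stern1 mulr1.
have index_pos : (0 < 2 ^ j * m)%N by rewrite muln_gt0 expn_gt0 (odd_gt0 m_odd).
rewrite neighbour_sum_pow2S expnS -mulnA mul2n neighbour_sum_double // stern_double.
rewrite exprS -mulrA mulrDr IH.
set x := 'X ^+ j; set b := stern (2 ^ j * m); ring.
Qed.

Theorem mainTheorem3 (n : nat) : (1 <= n)%N ->
  let mu := logn 2 n in
  'X ^+ mu * (stern n.+1 + stern n.-1)
  = (stern (2 ^ mu).+1 + stern (2 ^ mu).-1) * stern n.
Proof.
move=> n_pos mu; have [m coprime_2m def_n] := @pfactor_coprime 2 n isT n_pos.
have m_odd : odd m by rewrite -coprimen2 coprime_sym.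
by rewrite -!/(neighbour_sum _) def_n mulnC neighbour_sum_pow2_mul.
Qed.
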